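(* Let $K\subset\hat{\mathbb{C}}$ be a compactum and $h: K\rightarrow\hat{\mathbb{C}}$ an embedding. Then $h(d)\in\mathcal{D}_{h(K)}^{PS}$ for every $d\in\mathcal{D}_K^{PS}$. Therefore the Peano models $\mathcal{D}_K^{PS}$ and $\mathcal{D}_{h(K)}^{PS}$ (with quotient topologies) are homeomorphic.
   Context: A compactum is a compact metric space. A Peano space is a compactum having at most countably many non-degenerate components, each locally connected, such that for every $C>0$ at most finitely many of them have diameter greater than $C$. A monotone decomposition of a compactum $K$ is an (upper semicontinuous) partition of $K$ into subcontinua, with the quotient topology on the hyperspace. For a compactum $K\subset\hat{\mathbb{C}}$, $\mathcal{D}_K^{PS}$ denotes the unique monotone decomposition of $K$ with Peano hyperspace that is finer than every other such decomposition (its existence is known); the hyperspace $\mathcal{D}_K^{PS}$ with the quotient topology is called the Peano model of $K$. *)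

From HB Require Import structures.
From mathcomp Require Import all_boot all_order all_algebra.
From mathcomp Require Import all_classical all_reals all_analysis.
Set Implicit Arguments. Unset Strict Implicit. Unset Printing Implicit Defensive.
Import Order.TTheory GRing.Theory Num.Theory.
Import numFieldNormedType.Exports.
Local Open Scope classical_set_scope.
Local Open Scope ring_scope.

Section Abstract.
Context (R : realType) (S : Type).

Definition gconnected (tau : set (set S)) (A : set S) :=
  forall U V, tau U -> tau V -> A `<=` U `|` V -> A `&` U `&` V = set0 ->
    A `&` U = set0 \/ A `&` V = set0.

Definition gcomponent (X : set S) (tau : set (set S)) (C : set S) :=
  exists2 x, X x &
    C = \bigcup_(A in [set A | [/\ A `<=` X, gconnected tau A & A x]]) A.

Definition glocally_connected (tau : set (set S)) (C : set S) :=
  forall x, C x -> forall U, tau U -> U x ->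
    exists V, [/\ tau V, V x, C `&` V `<=` U & gconnected tau (C `&` V)].

Definition gcompact (X : set S) (tau : set (set S)) :=
  forall UU : set (set S), UU `<=` tau -> X `<=` \bigcup_(U in UU) U ->
    exists2 VV : set (set S), finite_set VV /\ VV `<=` UU & X `<=` \bigcup_(V in VV) V.

Definition is_metric (X : set S) (dist : S -> S -> R) :=
  forall x y z, X x -> X y -> X z ->
    [/\ 0 <= dist x y, (dist x y = 0 <-> x = y), dist x y = dist y x
      & dist x z <= dist x y + dist y z].

Definition metrizes (X : set S) (tau : set (set S)) (dist : S -> S -> R) :=
  is_metric X dist /\
  forall U, tau U <-> (U `<=` X /\ forall x, U x ->
     exists2 e : R, 0 < e & [set y | X y /\ dist x y < e] `<=` U).

Definition nondegenerate (C : set S) := exists x y, [/\ C x, C y & x <> y].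

Definition peano_space (X : set S) (tau : set (set S)) :=
  exists dist : S -> S -> R, [/\ metrizes X tau dist, gcompact X tau,
    countable [set C | gcomponent X tau C /\ nondegenerate C],
    (forall C, gcomponent X tau C -> nondegenerate C -> glocally_connected tau C) &
    (forall eps : R, 0 < eps -> finite_set
       [set C | gcomponent X tau C /\ exists x y, [/\ C x, C y & eps < dist x y]])].
End Abstract.

Definition ghomeomorphic (S1 S2 : Type) (X1 : set S1) (tau1 : set (set S1))
  (X2 : set S2) (tau2 : set (set S2)) :=
  exists f : S1 -> S2, [/\ set_bij X1 X2 f,
    (forall U, tau2 U -> tau1 (X1 `&` f @^-1` U)) &
    (forall U, tau1 U -> tau2 (f @` U))].

(* ---------- The Riemann sphere, modelled as the unit sphere S^2 in R^3 ---------- *)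
Section Sphere.
Context (R : realType).
Local Notation T := 'rV[R]_3.

Definition riemann_sphere : set T := [set x | \sum_(i < 3) x ord0 i ^+ 2 = 1].

Definition embedding_into_sphere (K : set T) (h : T -> T) :=
  [/\ h @` K `<=` riemann_sphere, {within K, continuous h}, set_inj K h &
      exists g : T -> T, (forall x, K x -> g (h x) = x) /\ {within h @` K, continuous g}].

Definition subcontinuum (d : set T) := [/\ d !=set0, compact d & connected d].

Definition usc (D : set (set T)) :=
  forall d, D d -> forall U, open U -> d `<=` U ->
    exists2 V, open V & d `<=` V /\ forall e, D e -> e `&` V !=set0 -> e `<=` U.

Definition monotone_decomposition (K : set T) (D : set (set T)) :=
  [/\ forall d, D d -> subcontinuum d /\ d `<=` K,
      forall d e, D d -> D e -> d `&` e !=set0 -> d = e,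
      K `<=` \bigcup_(d in D) d & usc D].

Definition rel_open (K A : set T) := exists2 W, open W & A = K `&` W.

(* quotient topology on the hyperspace D *)
Definition hyper_open (K : set T) (D : set (set T)) : set (set (set T)) :=
  [set UU | UU `<=` D /\ rel_open K (\bigcup_(d in UU) d)].

Definition peano_hyperspace (K : set T) (D : set (set T)) :=
  peano_space R D (hyper_open K D).

Definition finer (D1 D2 : set (set T)) := forall d, D1 d -> exists2 e, D2 e & d `<=` e.

Definition is_DPS (K : set T) (D : set (set T)) :=
  [/\ monotone_decomposition K D, peano_hyperspace K D &
      forall D', monotone_decomposition K D' -> peano_hyperspace K D' -> finer D D'].
End Sphere.

(* An embedding h of K with inverse g on h(K) induces mutually inverse maps
   d |-> h(d) and e |-> g(e) between monotone decompositions of K and of h(K);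
   they are homeomorphisms of the hyperspaces, because relative openness of a
   union of elements is carried over by the continuity of g and h.  Everything
   in the definition of a Peano space (metric, compactness, components, local
   connectedness, diameters) is invariant under such a homeomorphism, so the
   image of D_K^PS is a monotone decomposition of h(K) with Peano hyperspace,
   and symmetrically.  By minimality each of D_K^PS and D_h(K)^PS refines the
   image of the other; as elements of a decomposition are nonempty and pairwise
   disjoint, this forces h(d) to be an element of D_h(K)^PS. *)

From Pilot Require Import Defs.
From HB Require Import structures.
From mathcomp Require Import all_boot all_order all_algebra.
From mathcomp Require Import all_classical all_reals all_analysis.
Import numFieldNormedType.Exports.
Local Open Scope classical_set_scope.
Local Open Scope ring_scope.
Set Implicit Arguments.
Unset Strict Implicit.

Lemma image_inv_id (T U : Type) (A : set T) (f : T -> U) (g : U -> T) :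
  (forall x, A x -> g (f x) = x) -> g @` (f @` A) = A.
Proof. by move=> fK; rewrite image_comp; apply: eq_image_id. Qed.

Section SpaceIso.
Variables (S1 S2 : Type) (X1 : set S1) (tau1 : set (set S1)).
Variables (X2 : set S2) (tau2 : set (set S2)).

Record space_iso (phi : S1 -> S2) (psi : S2 -> S1) : Prop := SpaceIso {
  iso_mem : forall x, X1 x -> X2 (phi x);
  iso_inv_mem : forall y, X2 y -> X1 (psi y);
  isoK : forall x, X1 x -> psi (phi x) = x;
  iso_invK : forall y, X2 y -> phi (psi y) = y;
  iso_open_sub : forall U, tau1 U -> U `<=` X1;
  iso_inv_open_sub : forall V, tau2 V -> V `<=` X2;
  iso_open : forall U, tau1 U -> tau2 (phi @` U);
  iso_inv_open : forall V, tau2 V -> tau1 (psi @` V) }.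

End SpaceIso.

Lemma space_iso_sym (S1 S2 : Type) (X1 : set S1) (tau1 : set (set S1))
    (X2 : set S2) (tau2 : set (set S2)) phi psi :
  space_iso X1 tau1 X2 tau2 phi psi -> space_iso X2 tau2 X1 tau1 psi phi.
Proof. by case; split. Qed.

Section SpaceIsoImage.
Variables (S1 S2 : Type) (X1 : set S1) (tau1 : set (set S1)).
Variables (X2 : set S2) (tau2 : set (set S2)) (phi : S1 -> S2) (psi : S2 -> S1).
Hypothesis iso : space_iso X1 tau1 X2 tau2 phi psi.

Lemma image_isoK A : A `<=` X1 -> psi @` (phi @` A) = A.
Proof. by move=> AX; apply: image_inv_id => x /AX; exact: (isoK iso). Qed.

Lemma image_iso_invK B : B `<=` X2 -> phi @` (psi @` B) = B.
Proof. by move=> BX; apply: image_inv_id => y /BX; exact: (iso_invK iso). Qed.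

Lemma image_isoI A B : A `<=` X1 -> B `<=` X1 ->
  phi @` A `&` phi @` B = phi @` (A `&` B).
Proof.
move=> AX BX; apply/seteqP; split; last exact: sub_image_setI.
move=> _ [[a Aa <-] [b Bb eab]].
have ab : a = b by rewrite -(isoK iso (AX _ Aa)) -eab (isoK iso) //; apply: BX.
by subst a; exists b.
Qed.

Lemma image_isoI_inv A V : A `<=` X1 -> V `<=` X2 ->
  phi @` A `&` V = phi @` (A `&` psi @` V).
Proof.
move=> AX VX; rewrite -{1}(image_iso_invK VX) image_isoI //.
by move=> _ [y /VX Vy <-]; exact: (iso_inv_mem iso).
Qed.

Lemma gconnected_image A : A `<=` X1 ->
  gconnected tau1 A -> gconnected tau2 (phi @` A).
Proof.
move=> AX cA U V tU tV AUV AUV0.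
have [UX VX] := (iso_inv_open_sub iso tU, iso_inv_open_sub iso tV).
have AI0 W : W `<=` X2 -> A `&` psi @` W = set0 -> phi @` A `&` W = set0.
  by move=> WX AW0; rewrite image_isoI_inv // AW0 image_set0.
case: (cA _ _ (iso_inv_open iso tU) (iso_inv_open iso tV)).
- by rewrite -(image_isoK AX) -image_setU; apply: image_subset.
- apply: (@image_set0_set0 _ _ _ phi).
  rewrite -(image_isoI_inv _ VX) -?(image_isoI_inv AX UX) //.
  by move=> x [/AX].
- by move/(AI0 _ UX); left.
- by move/(AI0 _ VX); right.
Qed.

Lemma nondegenerate_image C : C `<=` X1 ->
  Defs.nondegenerate C -> Defs.nondegenerate (phi @` C).
Proof.
move=> CX [x [y [Cx Cy xy]]]; exists (phi x), (phi y); split; [by exists x|by exists y|].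
by move=> /(congr1 psi); rewrite !(isoK iso) //; exact: CX.
Qed.

Lemma glocally_connected_image C : C `<=` X1 ->
  glocally_connected tau1 C -> glocally_connected tau2 (phi @` C).
Proof.
move=> CX lcC _ [x Cx <-] U tU Ux.
have UX := iso_inv_open_sub iso tU.
have psiUx : (psi @` U) x by exists (phi x) => //; rewrite (isoK iso) //; apply: CX.
have [V [tV Vx CVU cCV]] := lcC x Cx _ (iso_inv_open iso tU) psiUx.
have CVX : C `&` V `<=` X1 by move=> y [/CX].
exists (phi @` V); rewrite image_isoI //; last exact: (iso_open_sub iso tV).
split; [exact: (iso_open iso)|by exists x| |exact: gconnected_image].
by rewrite -(image_iso_invK UX); apply: image_subset.
Qed.

Lemma gcompact_image : gcompact X1 tau1 -> gcompact X2 tau2.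
Proof.
move=> cpt UU UUtau X2UU.
have [|x X1x|VV [finVV VVUU] X1VV] := cpt ((fun U => psi @` U) @` UU).
- by move=> _ [U /UUtau tU <-]; exact: (iso_inv_open iso).
- have [U UUU Ux] := X2UU _ (iso_mem iso X1x).
  by exists (psi @` U); [exists U|exists (phi x) => //; rewrite (isoK iso)].
exists ((fun V => phi @` V) @` VV); first split.
- exact: finite_image.
- move=> _ [V /VVUU [U UUU <-] <-].
  by rewrite image_iso_invK //; exact: (iso_inv_open_sub iso (UUtau _ UUU)).
- move=> y X2y; have [V VVV Vy] := X1VV _ (iso_inv_mem iso X2y).
  by exists (phi @` V); [exists V|exists (psi y) => //; rewrite (iso_invK iso)].
Qed.

Lemma is_metric_image (R : realType) (dist : S1 -> S1 -> R) :
  is_metric X1 dist -> is_metric X2 (fun y y' => dist (psi y) (psi y')).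
Proof.
move=> mdist y y' y'' X2y X2y' X2y''.
have [d0 d_eq0 dC dtri] :=
  mdist _ _ _ (iso_inv_mem iso X2y) (iso_inv_mem iso X2y') (iso_inv_mem iso X2y'').
split=> //; split=> [/d_eq0 psiyy'|yy']; last by apply/d_eq0; rewrite yy'.
by rewrite -(iso_invK iso X2y) psiyy' (iso_invK iso).
Qed.

Lemma metrizes_image (R : realType) (dist : S1 -> S1 -> R) :
  metrizes X1 tau1 dist -> metrizes X2 tau2 (fun y y' => dist (psi y) (psi y')).
Proof.
move=> [mdist tau1E]; split; first exact: is_metric_image.
move=> V; split=> [tV|[VX ballV]].
- have VX := iso_inv_open_sub iso tV; split=> // y Vy.
  have [_ ball1] := (tau1E _).1 (iso_inv_open iso tV).
  have [e e0 sub_e] := ball1 (psi y) (ex_intro2 _ _ y Vy erefl).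
  exists e => // y' [X2y' dyy'].
  have [v Vv psiv] := sub_e (psi y') (conj (iso_inv_mem iso X2y') dyy').
  by rewrite -(iso_invK iso X2y') -psiv (iso_invK iso) //; apply: VX.
- rewrite -(image_iso_invK VX); apply: (iso_open iso); apply/tau1E; split.
    by move=> _ [y /VX X2y <-]; exact: (iso_inv_mem iso).
  move=> _ [y Vy <-]; have [e e0 sub_e] := ballV y Vy.
  exists e => // x [X1x dx]; exists (phi x); last exact: (isoK iso).
  by apply: sub_e; split; [exact: (iso_mem iso)|rewrite (isoK iso)].
Qed.
End SpaceIsoImage.

Lemma gcomponent_sub (S : Type) (X : set S) (tau : set (set S)) C :
  gcomponent X tau C -> C `<=` X.
Proof. by case=> x _ -> y [A [AX _ _] /AX]. Qed.

Section SpaceIsoComponent.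
Variables (S1 S2 : Type) (X1 : set S1) (tau1 : set (set S1)).
Variables (X2 : set S2) (tau2 : set (set S2)) (phi : S1 -> S2) (psi : S2 -> S1).
Hypothesis iso : space_iso X1 tau1 X2 tau2 phi psi.

Lemma gcomponent_image C : gcomponent X1 tau1 C -> gcomponent X2 tau2 (phi @` C).
Proof.
case=> x X1x ->; exists (phi x); first exact: (iso_mem iso).
rewrite image_bigcup; apply/seteqP; split=> y.
- case=> A [AX cA Ax] Ay; exists (phi @` A) => //.
  split; [|exact: (gconnected_image iso)|by exists x].
  by move=> _ [a /AX X1a <-]; exact: (iso_mem iso).
- case=> B [BX cB Bx] By; exists (psi @` B); last by rewrite (image_iso_invK iso).
  split; [|exact: (gconnected_image (space_iso_sym iso))|].
  + by move=> _ [b /BX X2b <-]; exact: (iso_inv_mem iso).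
  + by exists (phi x) => //; exact: (isoK iso).
Qed.
End SpaceIsoComponent.

Section SpaceIsoPeano.
Variables (S1 S2 : Type) (X1 : set S1) (tau1 : set (set S1)).
Variables (X2 : set S2) (tau2 : set (set S2)) (phi : S1 -> S2) (psi : S2 -> S1).
Hypothesis iso : space_iso X1 tau1 X2 tau2 phi psi.

Let iso_sym := space_iso_sym iso.

Lemma gcomponent_image_sub (P : set S2 -> Prop) (Q : set S1 -> Prop) :
  (forall C, gcomponent X2 tau2 C -> P C -> Q (psi @` C)) ->
  [set C | gcomponent X2 tau2 C /\ P C] `<=`
    (fun C => phi @` C) @` [set C | gcomponent X1 tau1 C /\ Q C].
Proof.
move=> PQ C [cC PC]; exists (psi @` C).
  by split; [exact: (gcomponent_image iso_sym)|exact: PQ].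
exact: (image_iso_invK iso (gcomponent_sub cC)).
Qed.

Lemma peano_space_image (R : realType) : peano_space R X1 tau1 -> peano_space R X2 tau2.
Proof.
case=> dist [mdist cpt cnt lc fin].
exists (fun y y' => dist (psi y) (psi y')); split.
- exact: (metrizes_image iso).
- exact: (gcompact_image iso).
- apply: sub_countable cnt; apply: card_le_trans (card_image_le _ _).
  apply/subset_card_le/gcomponent_image_sub => C cC.
  exact: (nondegenerate_image iso_sym (gcomponent_sub cC)).
- move=> C cC nC; have CX := gcomponent_sub cC.
  rewrite -(image_iso_invK iso CX); apply: (glocally_connected_image iso).
    by move=> _ [y /CX X2y <-]; exact: (iso_inv_mem iso).
  apply: lc; first exact: (gcomponent_image iso_sym).
  exact: (nondegenerate_image iso_sym CX).
- move=> eps eps0; apply: sub_finite_set (finite_image _ (fin eps eps0)).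
  apply: gcomponent_image_sub => C _ [y [y' [Cy Cy' dyy']]].
  by exists (psi y), (psi y'); split; [exists y|exists y'|].
Qed.

Lemma ghomeomorphic_of_iso : ghomeomorphic X1 tau1 X2 tau2.
Proof.
exists phi; split; last exact: (iso_open iso).
- split.
  + by move=> x X1x; exact: (iso_mem iso).
  + move=> x x' /set_mem X1x /set_mem X1x' /(congr1 psi).
    by rewrite !(isoK iso).
  + move=> y X2y; exists (psi y); [exact: (iso_inv_mem iso)|exact: (iso_invK iso)].
- move=> V tV; suff -> : X1 `&` phi @^-1` V = psi @` V by exact: (iso_inv_open iso).
  apply/seteqP; split=> [x [X1x Vphix]|_ [y Vy <-]].
    by exists (phi x) => //; exact: (isoK iso).
  have X2y := iso_inv_open_sub iso tV Vy.
  by split; [exact: (iso_inv_mem iso)|rewrite /preimage /= (iso_invK iso)].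
Qed.
End SpaceIsoPeano.

Lemma open_subspace_preimage (T U : topologicalType) (A : set T) (f : T -> U) W :
  {within A, continuous f} -> open W -> exists2 V, open V & A `&` f @^-1` W = A `&` V.
Proof.
move=> /continuousP fcont /fcont /open_subspaceP [V oV AfWV].
by exists V => //; rewrite setIC -AfWV setIC.
Qed.

Section Embedding.
Variable T : topologicalType.

Definition embedding_on (K : set T) (h g : T -> T) :=
  [/\ {within K, continuous h}, (forall x, K x -> g (h x) = x)
    & {within h @` K, continuous g}].

Lemma image_embeddingK K h g d : embedding_on K h g -> d `<=` K -> g @` (h @` d) = d.
Proof. by case=> _ hK _ dK; apply: image_inv_id => x /dK /hK. Qed.

Lemma embedding_on_inv K h g : embedding_on K h g -> embedding_on (h @` K) g h.
Proof.
move=> emb; have [hcont hK gcont] := emb; split => //.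
  by move=> _ [x Kx <-]; rewrite hK.
by rewrite (image_embeddingK emb).
Qed.
End Embedding.

Section SphereDecomposition.
Variable R : realType.
Local Notation T := 'rV[R]_3.
Implicit Types (K d : set T) (D : set (set T)) (h g : T -> T).

Lemma monotone_decomposition_sub K D d :
  monotone_decomposition K D -> D d -> d `<=` K.
Proof. by case=> DK _ _ _ /DK []. Qed.

Lemma rel_open_image K h g W : embedding_on K h g -> open W ->
  rel_open (h @` K) (h @` (K `&` W)).
Proof.
move=> [_ hK gcont] oW; have [V oV KgWV] := open_subspace_preimage gcont oW.
exists V => //; rewrite -KgWV; apply/seteqP; split.
  by move=> _ [x [Kx Wx] <-]; split; [exists x|rewrite /preimage /= hK].
by move=> _ [[x Kx <-]]; rewrite /preimage /= hK // => Wx; exists x.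
Qed.

Lemma usc_image K h g D : embedding_on K h g -> (forall d, D d -> d `<=` K) ->
  usc D -> usc ((fun d => h @` d) @` D).
Proof.
move=> [hcont hK gcont] DK uscD _ [d Dd <-] U oU hdU.
have [W oW KhUW] := open_subspace_preimage hcont oU.
have dW : d `<=` W.
  move=> x dx; have : (K `&` h @^-1` U) x.
    by split; [exact: DK _ Dd _ dx|apply: hdU; exists x].
  by rewrite KhUW => -[].
have [V oV [dV DVW]] := uscD d Dd W oW dW.
have [V' oV' hKgVV'] := open_subspace_preimage gcont oV.
have hV' x : K x -> V' (h x) -> V x.
  move=> Kx V'hx; have : (h @` K `&` V') (h x) by split => //; exists x.
  by rewrite -hKgVV' => -[_]; rewrite /preimage /= hK.
exists V' => //; split.
  move=> _ [x dx <-]; have Kx := DK _ Dd _ dx.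
  have : (h @` K `&` g @^-1` V) (h x).
    by split; [exists x|rewrite /preimage /= hK //; apply: dV].
  by rewrite hKgVV' => -[].
move=> _ [e De <-] [_ [[x ex <-] V'hx]] _ [y ey <-].
have eW := DVW e De (ex_intro _ x (conj ex (hV' x (DK _ De _ ex) V'hx))).
have : (K `&` W) y by split; [exact: DK _ De _ ey|exact: eW].
by rewrite -KhUW => -[].
Qed.

Lemma monotone_decomposition_image K h g D : embedding_on K h g ->
  monotone_decomposition K D -> monotone_decomposition (h @` K) ((fun d => h @` d) @` D).
Proof.
move=> emb mD; have [hcont hK _] := emb; have [Dsub Ddisj Dcover uscD] := mD.
have DK := monotone_decomposition_sub mD; split.
- move=> _ [d Dd <-]; have [[[x dx] cd cnd] dK] := Dsub d Dd.
  have hdcont := continuous_subspaceW dK hcont.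
  split; last exact: image_subset.
  split; [by exists (h x), x|exact: continuous_compact|].
  exact: connected_continuous_connected.
- move=> _ _ [d Dd <-] [e De <-] [_ [[x dx <-] [y ey hxy]]].
  have xy : x = y by rewrite -(hK _ (DK _ Dd _ dx)) -hxy hK //; exact: DK _ De _ ey.
  by rewrite (Ddisj d e) //; exists x; split => //; rewrite xy.
- move=> _ [x Kx <-]; have [d Dd dx] := Dcover x Kx.
  by exists (h @` d); [exists d|exists x].
- exact: usc_image emb DK uscD.
Qed.

Lemma hyper_open_image K h g D D' UU : embedding_on K h g ->
  (forall d, D d -> D' (h @` d)) ->
  hyper_open K D UU -> hyper_open (h @` K) D' ((fun d => h @` d) @` UU).
Proof.
move=> emb hD [UUD [W oW UUW]]; split.
  by move=> _ [d /UUD Dd <-]; exact: hD.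
by rewrite bigcup_image -image_bigcup UUW; exact: rel_open_image emb oW.
Qed.

Lemma hyperspace_iso K h g D D' : embedding_on K h g ->
  monotone_decomposition K D -> monotone_decomposition (h @` K) D' ->
  (forall d, D d -> D' (h @` d)) -> (forall d, D' d -> D (g @` d)) ->
  space_iso D (hyper_open K D) D' (hyper_open (h @` K) D')
    (fun d => h @` d) (fun d => g @` d).
Proof.
move=> emb mD mD' hD gD; have emb' := embedding_on_inv emb.
split=> //.
- by move=> d /(monotone_decomposition_sub mD) /(image_embeddingK emb).
- by move=> d /(monotone_decomposition_sub mD') /(image_embeddingK emb').
- by move=> UU [].
- by move=> UU [].
- by move=> UU; exact: hyper_open_image emb hD.
- move=> UU /(hyper_open_image emb' gD).
  by rewrite (image_embeddingK emb (@subset_refl _ K)).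
Qed.

Lemma peano_hyperspace_image K h g D : embedding_on K h g ->
  monotone_decomposition K D -> peano_hyperspace K D ->
  peano_hyperspace (h @` K) ((fun d => h @` d) @` D).
Proof.
move=> emb mD; apply: peano_space_image.
apply: (hyperspace_iso emb mD (monotone_decomposition_image emb mD)).
- by move=> d Dd; exists d.
- move=> _ [d Dd <-].
  by rewrite (image_embeddingK emb (monotone_decomposition_sub mD Dd)).
Qed.

Lemma is_DPS_image K h g DK DhK : embedding_on K h g ->
  is_DPS K DK -> is_DPS (h @` K) DhK -> forall d, DK d -> DhK (h @` d).
Proof.
move=> emb [mK pK minK] [mH pH minH] d DKd.
have emb' := embedding_on_inv emb.
have hgK := image_embeddingK emb (@subset_refl _ K).
have mH' := monotone_decomposition_image emb' mH.
have pH' := peano_hyperspace_image emb' mH pH.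
rewrite hgK in mH' pH'.
have [_ [e DhKe <-] d_ge] := minK _ mH' pH' d DKd.
have [_ [d' DKd' <-] e_hd'] :=
  minH _ (monotone_decomposition_image emb mK) (peano_hyperspace_image emb mK pK) e DhKe.
have eK := monotone_decomposition_sub mH DhKe.
have d_d' : d `<=` d'.
  have d'K := monotone_decomposition_sub mK DKd'.
  by apply: subset_trans d_ge _; rewrite -(image_embeddingK emb d'K); exact: image_subset.
have dd' : d = d'.
  have [Dsub Ddisj _ _] := mK; have [[[x dx] _ _] _] := Dsub d DKd.
  by apply: Ddisj => //; exists x; split => //; exact: d_d'.
subst d'.
suff -> : h @` d = e by [].
apply/seteqP; split; last by [].
by rewrite -(image_embeddingK emb' eK); exact: image_subset.
Qed.
End SphereDecomposition.

Theorem theoremC (R : realType) (K : set 'rV[R]_3) (h : 'rV[R]_3 -> 'rV[R]_3)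
  (DK DhK : set (set 'rV[R]_3)) :
  compact K -> K `<=` @riemann_sphere R -> embedding_into_sphere K h ->
  is_DPS K DK -> is_DPS (h @` K) DhK ->
  (forall d, DK d -> DhK (h @` d)) /\
  ghomeomorphic DK (hyper_open K DK) DhK (hyper_open (h @` K) DhK).
Proof.
move=> _ _ [_ hcont _ [g [hK gcont]]] DPS_K DPS_hK.
have emb : embedding_on K h g by split.
have hD := is_DPS_image emb DPS_K DPS_hK.
have gD : forall d, DhK d -> DK (g @` d).
  apply: is_DPS_image (embedding_on_inv emb) DPS_hK _.
  by rewrite (image_embeddingK emb (@subset_refl _ K)).
split=> //; apply: ghomeomorphic_of_iso.
by case: DPS_K DPS_hK => [mK _ _] [mH _ _]; exact: hyperspace_iso emb mK mH hD gD.
Qed.
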